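(* Let $n\ge 1$ and let $S\in Sp(4n,\mathbb{R})$ be written in $2n\times 2n$ blocks. Suppose that for all covariance matrices $\varGamma_1,\varGamma_2\in\mathbb{R}^{2n\times 2n}$ the matrix $$S\begin{pmatrix}\varGamma_1&0\\0&\varGamma_2\end{pmatrix}S^{T}$$ is block diagonal, i.e. of the form $\begin{pmatrix}\cdot&0\\0&*\end{pmatrix}$ with $2n\times 2n$ diagonal blocks (which are covariance matrices). Then $S$ is either of the form $\begin{pmatrix}A&0\\0&D\end{pmatrix}$ or of the form $\begin{pmatrix}0&B\\C&0\end{pmatrix}$ with $A,B,C,D\in Sp(2n,\mathbb{R})$.
   Context: $\sigma=\bigoplus_{i=1}^{n}\omega$ with $\omega=\begin{pmatrix}0&1\\-1&0\end{pmatrix}$ is the $2n\times 2n$ symplectic form (and $\sigma\oplus\sigma$ the $4n\times4n$ one). $Sp(2m,\mathbb{R})$ is the group of real $2m\times 2m$ matrices $S$ with $S\sigma S^T=\sigma$. A covariance matrix (CM) is a real symmetric $2n\times 2n$ matrix $\varGamma$ satisfying $\varGamma+i\sigma\ge 0$. *)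

From HB Require Import structures.
From mathcomp Require Import all_boot all_order all_algebra.
From mathcomp Require Import complex.
Set Implicit Arguments. Unset Strict Implicit. Unset Printing Implicit Defensive.
Import Order.TTheory GRing.Theory Num.Theory.
Local Open Scope ring_scope.

(* Symplectic form on R^m (m even): direct sum of copies of
   omega = [[0,1],[-1,0]], i.e. entry (2k,2k+1) = 1, (2k+1,2k) = -1. *)
Definition sympl_form (R : rcfType) (m : nat) : 'M[R]_m :=
  \matrix_(i < m, j < m)
    (if ~~ odd i && (j == i.+1 :> nat) then 1
     else if odd i && (j.+1 == i :> nat) then -1 else 0).

Definition symplectic (R : rcfType) (m : nat) (S : 'M[R]_m) : Prop :=
  S *m sympl_form R m *m S^T = sympl_form R m.

Definition cov_cmx (R : rcfType) (m : nat) (G : 'M[R]_m) : 'M[R[i]]_m :=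
  \matrix_(i < m, j < m) Complex (G i j) (sympl_form R m i j).

Definition psd_c (R : rcfType) (m : nat) (M : 'M[R[i]]_m) : Prop :=
  forall v : 'cV[R[i]]_m, 0 <= ((map_mx (@conjc R) v)^T *m M *m v) 0 0.

Definition covariance (R : rcfType) (m : nat) (G : 'M[R]_m) : Prop :=
  G^T = G /\ psd_c (cov_cmx G).

From HB Require Import structures.
From mathcomp Require Import all_boot all_order all_algebra.
From mathcomp Require Import complex.
From mathcomp Require Import zify.
Import Order.TTheory GRing.Theory Num.Theory.
Local Open Scope ring_scope.

(* Write S = [[A, B], [C, D]]. The off-diagonal block of S diag(G1, G2) S^T is
   A G1 C^T + B G2 D^T. The identity is a covariance matrix (sigma^2 = -1 makes
   1 + i sigma twice a Hermitian projection), and so is 1 + x x^T for every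
   real x. Comparing G1 = 1 + x x^T with G1 = 1 gives (A x)(C x)^T = 0, so
   A x = 0 or C x = 0 for every x; as a vector space is not the union of two
   proper subspaces, A = 0 or C = 0. Likewise B = 0 or D = 0. The diagonal
   blocks of S sigma S^T = sigma read A sigma A^T + B sigma B^T = sigma and
   C sigma C^T + D sigma D^T = sigma, which rules out A = B = 0 and C = D = 0
   and makes the two surviving blocks symplectic. *)

Reserved Notation "A ^H" (format "A ^H").
Local Notation "A ^H" := (trmx (map_mx (@conjc _) A)).

Section SymplecticForm.
Variable R : rcfType.
Local Set Implicit Arguments.
Local Unset Strict Implicit.
Local Notation sigma := (sympl_form R).

Definition sympl_partner (i : nat) : nat := if odd i then i.-1 else i.+1.

Lemma odd_sympl_partner i : odd (sympl_partner i) = ~~ odd i.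
Proof.
rewrite /sympl_partner; case: (boolP (odd i)) => //= oi.
by case: i oi => //= i /negbTE.
Qed.

Lemma sympl_partnerK : involutive sympl_partner.
Proof.
move=> i; rewrite {1}/sympl_partner odd_sympl_partner /sympl_partner.
by case: (boolP (odd i)) => oi /=; [case: i oi|].
Qed.

Lemma sympl_formE m (i k : 'I_m) :
  sigma m i k = if (k : nat) == sympl_partner i then (-1) ^+ odd i else 0.
Proof.
rewrite mxE /sympl_partner; case: (boolP (odd i)) => oi //=.
have i_gt0 : (0 < i)%N by case: (nat_of_ord i) oi.
by case: eqP => [e1|n1]; case: eqP => [e2|n2] //; lia.
Qed.

Lemma sympl_form_tr m : (sigma m)^T = - sigma m.
Proof.
apply/matrixP => i j; rewrite [LHS]mxE [RHS]mxE !sympl_formE.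
case: eqP => [ei|ni]; case: eqP => [ej|nj] //; rewrite ?oppr0 //.
- by rewrite ej odd_sympl_partner signrN.
- by case: nj; rewrite ei sympl_partnerK.
- by case: ni; rewrite ej sympl_partnerK.
Qed.

Lemma sympl_partner_lt n (i : 'I_n.*2) : (sympl_partner i < n.*2)%N.
Proof.
have := ltn_ord i; have := odd_double_half i.
by rewrite /sympl_partner; case: (odd i) => /=; lia.
Qed.

Lemma sympl_form_sqr n : sigma n.*2 *m sigma n.*2 = - 1%:M.
Proof.
apply/matrixP => i j; set i' := Ordinal (sympl_partner_lt i).
rewrite !mxE (bigD1 i') //= big1 ?addr0; last first.
  by move=> k nk; rewrite sympl_formE ifN ?mul0r.
rewrite !sympl_formE eqxx sympl_partnerK odd_sympl_partner signrN eq_sym.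
have -> : (i == j :> nat) = (i == j) by [].
by case: (i == j); rewrite ?mulr0 ?oppr0 // mulrN -expr2 sqrr_sign.
Qed.

Lemma sympl_partnerD n i : sympl_partner (n.*2 + i) = n.*2 + sympl_partner i.
Proof.
rewrite /sympl_partner oddD odd_double /=.
by case: (boolP (odd i)) => [|_]; [case: i => //= i _|]; lia.
Qed.

Lemma sympl_form_block n k :
  sigma (n.*2 + k) = block_mx (sigma n.*2) 0 0 (sigma k).
Proof.
apply/matrixP => i j; rewrite -(splitK i) -(splitK j).
case: (split i) => i'; case: (split j) => j';
  rewrite sympl_formE ?block_mxEul ?block_mxEur ?block_mxEdl ?block_mxEdr
          ?sympl_formE ?mxE //=.
- by rewrite ifN //; apply/eqP; have := sympl_partner_lt i'; lia.
- by rewrite sympl_partnerD ifN //; apply/eqP; have := ltn_ord j'; lia.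
- by rewrite sympl_partnerD eqn_add2l oddD odd_double.
Qed.

Lemma sympl_form_neq0 m : (1 < m)%N -> sigma m != 0.
Proof.
case: m => [|[|m]] // _; apply/eqP => /matrixP /(_ 0 1).
by rewrite sympl_formE mxE /=; move/eqP; rewrite oner_eq0.
Qed.

End SymplecticForm.

Section Covariance.
Context {R : rcfType}.
Local Set Implicit Arguments.
Local Unset Strict Implicit.
Local Notation toC := (real_complex R).

Lemma adj_mul_self_ge0 p (u : 'cV[R[i]]_p) : 0 <= (u^H *m u) 0 0.
Proof.
by rewrite mxE; apply: sumr_ge0 => k _; rewrite !mxE mulrC mulcJ_ge0.
Qed.

Lemma psd_cD m (M N : 'M[R[i]]_m) : psd_c M -> psd_c N -> psd_c (M + N).
Proof.
by move=> hM hN v; rewrite mulmxDr mulmxDl mxE addr_ge0.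
Qed.

Lemma psd_c_gram p m (N : 'M[R[i]]_(p, m)) : psd_c (N^H *m N).
Proof.
move=> v; have := adj_mul_self_ge0 (N *m v).
by rewrite map_mxM trmx_mul !mulmxA.
Qed.

Lemma cov_cmxE m (G : 'M[R]_m) :
  cov_cmx G = map_mx toC G + 'i%C *: map_mx toC (sympl_form R m).
Proof.
apply/matrixP => i j; rewrite !mxE; apply/eqP; rewrite eq_complex /=.
by rewrite !mul0r !mul1r !subr0 !addr0 !add0r !eqxx.
Qed.

Lemma cov_cmxD_real m (G H : 'M[R]_m) :
  cov_cmx (G + H) = cov_cmx G + map_mx toC H.
Proof. by rewrite !cov_cmxE map_mxD addrAC. Qed.

Lemma cov_cmx_adj m (G : 'M[R]_m) : G^T = G -> (cov_cmx G)^H = cov_cmx G.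
Proof.
move=> symG; apply/matrixP => i j.
have /matrixP/(_ i j) := sympl_form_tr R m; rewrite !mxE => ->.
have -> : G j i = G i j by rewrite -{1}symG mxE.
by rewrite /= opprK.
Qed.

Lemma cov_cmx1_sqr n :
  cov_cmx (1%:M : 'M[R]_n.*2) *m cov_cmx 1%:M = cov_cmx 1%:M + cov_cmx 1%:M.
Proof.
rewrite cov_cmxE map_mx1; set J := map_mx toC _.
have JJ : J *m J = - 1%:M by rewrite -map_mxM sympl_form_sqr map_mxN map_mx1.
rewrite mulmxDl mul1mx mulmxDr mulmx1 -scalemxAl -scalemxAr scalerA JJ.
by rewrite -expr2 sqr_i scaleN1r opprK [_ + 1%:M]addrC.
Qed.

Lemma covariance1 n : covariance (1%:M : 'M[R]_n.*2).
Proof.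
split; first exact: tr_scalar_mx.
move=> v; have := psd_c_gram (cov_cmx (1%:M : 'M[R]_n.*2)) v.
rewrite cov_cmx_adj ?tr_scalar_mx // cov_cmx1_sqr mulmxDr mulmxDl mxE.
by rewrite -mulr2n pmulrn_lge0.
Qed.

Lemma covarianceD_outer m (G : 'M[R]_m) (x : 'cV[R]_m) :
  covariance G -> covariance (G + x *m x^T).
Proof.
move=> [symG psdG]; split; first by rewrite linearD /= trmx_mul trmxK symG.
rewrite cov_cmxD_real; apply: psd_cD => //.
have -> : map_mx toC (x *m x^T) = (map_mx toC x)^T^H *m (map_mx toC x)^T.
  rewrite map_trmx trmxK map_mxM map_trmx; congr (_ *m _).
  by apply/matrixP => i j; rewrite !mxE conjc_real.
exact: psd_c_gram.
Qed.

End Covariance.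

Section MatrixFacts.
Context {R : fieldType}.
Local Set Implicit Arguments.
Local Unset Strict Implicit.

Lemma outer_prod_eq0 p q (a : 'cV[R]_p) (c : 'cV[R]_q) :
  a *m c^T = 0 -> a = 0 \/ c = 0.
Proof.
move=> ac0; have [i ai0|a0] := pickP (fun i => a i 0 != 0); last first.
  by left; apply/matrixP => i j; rewrite (ord1 j) mxE; apply/eqP/negbFE/a0.
right; apply/matrixP => j k; rewrite (ord1 k) mxE.
move/matrixP/(_ i j): ac0; rewrite !mxE big_ord1 !mxE => /eqP.
by rewrite mulf_eq0 (negbTE ai0) => /eqP.
Qed.

Lemma exists_mulmx_neq0 p r (B : 'M[R]_(p, r)) :
  B != 0 -> exists x : 'cV_r, B *m x != 0.
Proof.
move=> B0; have [j Bj0|Bcols0] := pickP (fun j => col j B != 0).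
  by exists (delta_mx j 0); rewrite -colE.
case/eqP: B0; apply/matrixP => i j.
by have /negbFE/eqP/matrixP/(_ i 0) := Bcols0 j; rewrite !mxE.
Qed.

(* A vector space is not the union of two proper subspaces: if [A x] and [C y]
   were nonzero, then [x + y] would lie in neither kernel. *)
Lemma kernel_cover_eq0 p q r (A : 'M[R]_(p, r)) (C : 'M[R]_(q, r)) :
  (forall x : 'cV_r, A *m x = 0 \/ C *m x = 0) -> A = 0 \/ C = 0.
Proof.
move=> cover; have [->|A0] := eqVneq A 0; first by left.
have [->|C0] := eqVneq C 0; first by right.
have [x Ax0] := exists_mulmx_neq0 A0; have [y Cy0] := exists_mulmx_neq0 C0.
have Cx : C *m x = 0 by case: (cover x) => // Ax; rewrite Ax eqxx in Ax0.
have Ay : A *m y = 0 by case: (cover y) => // Cy; rewrite Cy eqxx in Cy0.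
by case: (cover (x + y)); rewrite !mulmxDr ?Cx ?Ay ?addr0 ?add0r => e;
  [rewrite e eqxx in Ax0 | rewrite e eqxx in Cy0].
Qed.

Lemma block_congr_diag m1 m2 n1 n2 (A : 'M[R]_(m1, n1)) (B : 'M_(m1, n2))
    (C : 'M_(m2, n1)) (D : 'M_(m2, n2)) (G1 : 'M_n1) (G2 : 'M_n2) :
  block_mx A B C D *m block_mx G1 0 0 G2 *m (block_mx A B C D)^T =
  block_mx (A *m G1 *m A^T + B *m G2 *m B^T) (A *m G1 *m C^T + B *m G2 *m D^T)
           (C *m G1 *m A^T + D *m G2 *m B^T) (C *m G1 *m C^T + D *m G2 *m D^T).
Proof.
by rewrite tr_block_mx !mulmx_block !mulmx0 ?mul0mx !addr0 !add0r.
Qed.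

End MatrixFacts.

Section BlockDecomposition.
Context {R : rcfType}.
Local Set Implicit Arguments.
Local Unset Strict Implicit.

Lemma kernel_cover_of_offdiag m k p q (A : 'M[R]_(p, m.*2))
    (B : 'M_(p, k.*2)) (C : 'M_(q, m.*2)) (D : 'M_(q, k.*2)) :
  (forall G1 G2, covariance G1 -> covariance G2 ->
     A *m G1 *m C^T + B *m G2 *m D^T = 0) ->
  forall x : 'cV_(m.*2), A *m x = 0 \/ C *m x = 0.
Proof.
move=> offdiag x; apply: outer_prod_eq0.
have e1 := offdiag _ _ (covariance1 m) (covariance1 k).
have := offdiag _ _ (covarianceD_outer x (covariance1 m)) (covariance1 k).
rewrite mulmxDr mulmxDl addrAC !mulmx1 in e1 *.
by rewrite e1 add0r trmx_mul !mulmxA.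
Qed.

Lemma symplectic_block_diag n k (A : 'M[R]_n.*2)
    (B : 'M_(n.*2, k)) (C : 'M_(k, n.*2)) (D : 'M_k) :
  symplectic (block_mx A B C D) ->
  A *m sympl_form R n.*2 *m A^T + B *m sympl_form R k *m B^T = sympl_form R n.*2
  /\ C *m sympl_form R n.*2 *m C^T + D *m sympl_form R k *m D^T = sympl_form R k.
Proof.
rewrite /symplectic sympl_form_block block_congr_diag.
by case/eq_block_mx.
Qed.

End BlockDecomposition.

Theorem lemma1 (R : rcfType) (n : nat) (hn : (0 < n)%N)
  (S : 'M[R]_(n.*2 + n.*2)) :
  symplectic S ->
  (forall G1 G2 : 'M[R]_(n.*2), covariance G1 -> covariance G2 ->
     ursubmx (S *m block_mx G1 0 0 G2 *m S^T) = 0 /\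
     dlsubmx (S *m block_mx G1 0 0 G2 *m S^T) = 0) ->
  (ursubmx S = 0 /\ dlsubmx S = 0 /\
     symplectic (ulsubmx S) /\ symplectic (drsubmx S)) \/
  (ulsubmx S = 0 /\ drsubmx S = 0 /\
     symplectic (ursubmx S) /\ symplectic (dlsubmx S)).
Proof.
move=> symS diagS; rewrite -[S]submxK in symS diagS *.
rewrite block_mxKul block_mxKur block_mxKdl block_mxKdr.
move: (ulsubmx S) (ursubmx S) (dlsubmx S) (drsubmx S) symS diagS
  => A B C D symS diagS.
have offdiag G1 G2 : covariance G1 -> covariance G2 ->
    A *m G1 *m C^T + B *m G2 *m D^T = 0.
  move=> c1 c2; have [+ _] := diagS G1 G2 c1 c2.
  by rewrite block_congr_diag block_mxKur.
have AC := kernel_cover_eq0 (kernel_cover_of_offdiag offdiag).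
have BD : B = 0 \/ D = 0.
  apply: kernel_cover_eq0; apply: kernel_cover_of_offdiag => G1 G2 c1 c2.
  by rewrite addrC; apply: offdiag.
have [symAB symCD] := symplectic_block_diag symS.
have sigma0 : sympl_form R n.*2 != 0 by apply: sympl_form_neq0; lia.
case: AC BD => [A0|C0] [B0|D0]; subst.
- by move: sigma0; rewrite -symAB !mul0mx addr0 eqxx.
- by right; rewrite !mul0mx add0r addr0 in symAB symCD.
- by left; rewrite !mul0mx add0r addr0 in symAB symCD.
- by move: sigma0; rewrite -symCD !mul0mx addr0 eqxx.
Qed.
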